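(* Let $G$ be a finite simple connected graph with exactly $h$ holes. Suppose that all the holes in $G$ are pairwise edge-disjoint and that $G$ has exactly one non-edge maximal clique $K$. If $|V(K)|=h+1$, then there exists a vertex $v\in V(K)$ satisfying one of the following: (a) there is no $K$-avoiding path from $v$ to any vertex of any hole of $G$; (b) $v$ is incident to an edge that belongs to both $K$ and some hole $H$ of $G$, and $v$ is not contained in any hole of $G$ other than $H$.
   Context: A hole of a graph is an induced (chordless) cycle of length at least $4$. A clique is a complete subgraph; a clique is non-edge if it has at least $3$ vertices. For a clique $K$ in $G$, a path $P$ in $G$ is called a $K$-avoiding path if $P$ is not an edge of $K$ and none of the internal vertices of $P$ lies on $K$. *)

From mathcomp Require Import all_boot.
Set Implicit Arguments. Unset Strict Implicit. Unset Printing Implicit Defensive.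

Section Graphs.
Variables (T : finType) (e : rel T).

Definition simple_graph := symmetric e /\ irreflexive e.

Definition connected_graph := forall x y : T, connect e x y.

(* A hole: an induced (chordless) cycle of length >= 4, identified with its
   vertex set S (a hole is an induced subgraph, so it is determined by S). *)
Definition is_hole (S : {set T}) : Prop :=
  exists c : seq T,
    [/\ uniq c, 4 <= size c, cycle e c,
        {in c &, forall x y, e x y -> (y == next c x) || (y == prev c x)}
      & S = [set x in c]].

(* Edges of a hole H: since H is an induced subgraph, these are exactly the
   edges of G with both ends in H. *)
Definition hole_edge (H : {set T}) (x y : T) : bool :=
  [&& e x y, x \in H & y \in H].

Definition is_clique (K : {set T}) : Prop :=
  {in K &, forall x y, x != y -> e x y}.

Definition maximal_clique (K : {set T}) : Prop :=
  is_clique K /\ forall K' : {set T}, is_clique K' -> K \subset K' -> K' = K.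

Definition non_edge_clique (K : {set T}) : Prop := 3 <= #|K|.

Definition K_avoiding_path (K : {set T}) (v w : T) (p : seq T) : Prop :=
  [/\ path e v p, last v p = w, uniq (v :: p),
      ~~ [&& size p == 1, v \in K & w \in K]
    & all (fun x => x \notin K) (behead (belast v p))].

End Graphs.

From mathcomp Require Import all_boot zify.
From Stdlib Require Import Classical.
Set Implicit Arguments. Unset Strict Implicit. Unset Printing Implicit Defensive.

(* Proof by double counting.  Suppose every vertex v of K fails both (a) and
   (b).  Each v in K sends a "charge" to holes: to a hole through v, 1 if the
   hole contains another vertex of K and 2 otherwise; to a hole disjoint from
   K that v reaches outside K, 2, provided v lies on no hole containing
   another vertex of K.  Failing (b), a vertex on such a shared hole lies on a
   second hole, so it sends at least 1 + 1; failing (a), any other vertex has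
   a K-avoiding path to some hole, which receives 2 from it.  Conversely a
   hole receives at most 2: it meets K in at most two vertices (a chordless
   cycle has no triangle), and at most one vertex reaches a hole disjoint
   from K without being on a shared hole.  Hence 2|K| <= 2|holes|,
   contradicting |K| = |holes| + 1.  The geometric input is that two vertices
   v != u of K whose neighbours outside K are linked outside K lie on a common
   hole: a shortest detour from v to u around K closes up with the edge uv
   into a chordless cycle, of length at least 4 since, K being the only
   non-edge maximal clique, no vertex outside K has two neighbours in K. *)

Section CycleOrder.
Variable T : eqType.
Implicit Types (p q s : seq T) (x y : T).

Lemma next_mid p q x y : uniq (p ++ x :: y :: q) -> next (p ++ x :: y :: q) x = y.
Proof. by move=> U; rewrite -(next_rot (size p) U) rot_size_cat /= eqxx. Qed.

Lemma next_last s x y : uniq (x :: rcons s y) -> next (x :: rcons s y) y = x.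
Proof.
move=> U; rewrite -(next_rot (size s).+1 U) -cats1 -cat_cons.
by rewrite (rot_size_cat (x :: s)) /= eqxx.
Qed.

Lemma prev_mid p q x y : uniq (p ++ x :: y :: q) -> prev (p ++ x :: y :: q) y = x.
Proof. by move=> U; have := prev_next U x; rewrite (next_mid U). Qed.

Lemma prev_head s x y : uniq (x :: rcons s y) -> prev (x :: rcons s y) x = y.
Proof. by move=> U; have := prev_next U y; rewrite (next_last U). Qed.

End CycleOrder.

Section Chordless.
Variables (T : eqType) (r : rel T).
Hypotheses (r_sym : symmetric r) (r_irr : irreflexive r).

Lemma chordless_of_splits s : uniq s ->
  (forall c1 x m y c2, s = c1 ++ x :: m ++ y :: c2 -> r x y -> m = [::]) ->
  {in s &, forall x y, r x y -> (y == next s x) || (y == prev s x)}.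
Proof.
move=> U consec x y xs ys rxy.
have xy : x != y by apply: contraTneq rxy => ->; rewrite r_irr.
move: U consec ys; case/splitPr: xs => c1 c2 U consec.
rewrite mem_cat inE eq_sym (negPf xy) /= => /orP[yc1 | yc2].
- move: U consec; case/splitPr: yc1 => c0 m; rewrite -catA /= => U consec.
  have m0 : m = [::] by apply: (consec c0 y m x c2) => //; rewrite r_sym.
  by move: U; rewrite m0 /= => U; rewrite (prev_mid U) eqxx orbT.
- move: U consec; case/splitPr: yc2 => m c3 U consec.
  have m0 : m = [::] by apply: (consec c1 x m y c3).
  by move: U; rewrite m0 /= => U; rewrite (next_mid U) eqxx.
Qed.

End Chordless.

Section Triangle.
Variables (T : eqType) (e : rel T).
Hypothesis e_sym : symmetric e.

Definition chordless (c : seq T) :=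
  {in c &, forall x y, e x y -> (y == next c x) || (y == prev c x)}.

Lemma chordless_rot n c : uniq c -> chordless c -> chordless (rot n c).
Proof.
move=> U ch x y; rewrite !mem_rot => xc yc exy.
by rewrite next_rot // prev_rot //; apply: ch.
Qed.

Lemma chordless_triangle_free c x y z :
  uniq c -> 4 <= size c -> chordless c ->
  x \in c -> y \in c -> z \in c -> y != z -> e x y -> e y z -> e z x -> False.
Proof.
move=> U sz ch xc yc zc yz exy eyz ezx.
case: (rot_to xc) => i s Hs.
have [U' sz' ch'] : [/\ uniq (x :: s), 4 <= size (x :: s) & chordless (x :: s)].
  by rewrite -Hs rot_uniq size_rot; split => //; apply: chordless_rot.
have [ys zs] : y \in x :: s /\ z \in x :: s by rewrite -Hs !mem_rot.
case: s U' sz' ch' ys zs {Hs} => [|a [|b s]] // U' sz' ch' ys zs.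
case/lastP: s U' sz' ch' ys zs => [|m l] // U' _ ch' ys zs.
have xnbr w : w \in x :: a :: b :: rcons m l -> e x w -> (w == a) || (w == l).
  move=> ws exw; have := ch' x w (mem_head _ _) ws exw.
  by rewrite (next_mid (p := [::]) U') (prev_head (s := a :: b :: m) U').
have eal : e a l.
  move: (xnbr y ys exy) (xnbr z zs (etrans (e_sym _ _) ezx)) eyz yz.
  by do 2!case/orP=> /eqP->; rewrite ?eqxx // e_sym.
have lc : l \in x :: a :: b :: rcons m l by rewrite !inE mem_rcons mem_head !orbT.
have ac : a \in x :: a :: b :: rcons m l by rewrite !inE eqxx orbT.
have := ch' a l ac lc eal.
rewrite (next_mid (p := [:: x]) U') (prev_mid (p := [::]) U').
move: U'; rewrite /= !inE !mem_rcons !inE rcons_uniq !negb_or.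
case/and5P => /and4P[_ _ xl _] _ /andP[bl _] _ _.
by rewrite !(eq_sym l) (negPf bl) (negPf xl).
Qed.

End Triangle.

Section ShortestWalk.
Variables (T : finType) (r : rel T) (x y : T).

Definition walk (s : seq T) :=
  [&& sorted r s, uniq s, head y s == x & last x s == y].

Lemma shortest_walk_exists s0 : walk s0 ->
  exists2 s, walk s & forall s', walk s' -> size s <= size s'.
Proof.
move=> w0; pose P n := [exists t : n.-tuple T, walk t].
have P0 : exists n, P n by exists (size s0); apply/existsP; exists (in_tuple s0).
case: (ex_minnP P0) => n /existsP[t wt] tmin.
exists (val t) => // s' ws'; rewrite size_tuple; apply: tmin.
by apply/existsP; exists (in_tuple s').
Qed.

Lemma walk_shortcut c1 a m b c2 : walk (c1 ++ a :: m ++ b :: c2) -> r a b ->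
  walk (c1 ++ a :: b :: c2).
Proof.
case/and4P; rewrite sorted_cat_cons cat_path /= => /andP[s1 /and3P[_ _ pc2]].
move=> U hd lst rab; rewrite /walk sorted_cat_cons /= s1 rab pc2 /=; apply/and3P; split.
- by apply: subseq_uniq U; rewrite cat_subseq //= eqxx suffix_subseq.
- by case: (c1) hd.
- by move: lst; rewrite !last_cat /= last_cat.
Qed.

Lemma shortest_walk_consecutive s : walk s -> (forall s', walk s' -> size s <= size s') ->
  forall c1 a m b c2, s = c1 ++ a :: m ++ b :: c2 -> r a b -> m = [::].
Proof.
move=> ws smin c1 a m b c2 Es rab; move: ws; rewrite Es => ws.
have := smin _ (walk_shortcut ws rab); rewrite Es !size_cat /= size_cat.
by case: m {ws Es} => //= ? ?; lia.
Qed.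

End ShortestWalk.

Section Cliques.
Variables (T : finType) (e : rel T).
Hypothesis e_sym : symmetric e.

(* Every clique extends to a maximal one: take a largest clique containing it. *)
Lemma clique_in_maximal S : is_clique e S -> exists2 M, maximal_clique e M & S \subset M.
Proof.
move=> cS; pose clq (M : {set T}) := [forall x in M, forall y in M, (x != y) ==> e x y].
have clqP M : reflect (is_clique e M) (clq M).
  apply: (iffP forall_inP) => [h x y xM yM xy | h x xM].
    by have /forall_inP/(_ y yM)/implyP := h x xM; apply.
  by apply/forall_inP => y yM; apply/implyP; apply: h.
have PS : clq S && (S \subset S) by rewrite subxx andbT; apply/clqP.
case: (@arg_maxnP _ S (fun M => clq M && (S \subset M)) (fun M => #|M|) PS).
move=> M /andP[/clqP cM sSM] Mmax.
exists M => //; split=> // M' cM' sMM'.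
apply/eqP; rewrite eq_sym eqEcard sMM' /=; apply: Mmax.
by rewrite (subset_trans sSM sMM') andbT; apply/clqP.
Qed.

Lemma hole_meets_clique S K : is_clique e K -> is_hole e S -> #|S :&: K| <= 2.
Proof.
move=> cK [c [U sz _ ch ->]]; rewrite leqNgt; apply/negP.
case/card_gt2P => [x [y [z [[]]]]]; rewrite !inE.
move=> /andP[xc xK] /andP[yc yK] /andP[zc zK] [xy yz zx].
by apply: (chordless_triangle_free e_sym U sz ch xc yc zc yz); apply: cK.
Qed.

Variable K : {set T}.
Hypotheses (K_max : maximal_clique e K)
  (K_unique : forall K', maximal_clique e K' -> non_edge_clique K' -> K' = K).

(* When [K] is the only non-edge maximal clique, a vertex outside [K] has at
   most one neighbour in [K]: two would span a triangle outside every
   non-edge maximal clique. *)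
Lemma outside_one_neighbour x v u :
  x \notin K -> v \in K -> u \in K -> e v x -> e x u -> v = u.
Proof.
move=> xK vK uK evx exu; apply/eqP/negPn/negP => vu.
have [xv xu] : x != v /\ x != u by split; apply: contraNneq xK => ->.
have cT : is_clique e [set v; u; x].
  have evu : e v u by case: K_max => cK _; apply: cK.
  move=> a b; rewrite !inE -!orbA => /or3P[] /eqP-> /or3P[] /eqP->;
    by rewrite ?eqxx // => _; rewrite // e_sym.
have [M M_max sTM] := clique_in_maximal cT.
have M3 : non_edge_clique M.
  apply: leq_trans (subset_leq_card sTM); apply/card_gt2P.
  by exists v, u, x; rewrite !inE !eqxx !orbT; split; split; rewrite // eq_sym.
move/subsetP: sTM => /(_ x); rewrite (K_unique M_max M3) !inE eqxx orbT => /(_ isT).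
by rewrite (negPf xK).
Qed.

End Cliques.

Lemma path_targets (T : Type) (r : rel T) (P : pred T) x p :
  (forall a b, r a b -> P b) -> path r x p -> all P p.
Proof. by move=> rP; elim: p x => //= b p IH a /andP[/rP -> /IH]. Qed.

Section Outside.
Variables (T : finType) (e : rel T) (K : {set T}).

Definition outside : rel T := [rel a b | [&& e a b, a \notin K & b \notin K]].

Lemma outside_sym : symmetric e -> symmetric outside.
Proof. by move=> e_sym a b; rewrite /outside /= e_sym; congr (_ && _); apply: andbC. Qed.

Lemma outside_path x p :
  all (fun z => z \notin K) (x :: p) -> path e x p -> path outside x p.
Proof.
move=> pK; apply: sub_in_path pK => a b /[!unfold_in] aK bK eab.
by rewrite /outside /= eab aK bK.
Qed.

Lemma path_enter w p : w \notin K -> path e w p -> has (mem K) p ->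
  exists2 y, connect outside w y & exists2 u, u \in p & (u \in K) && e y u.
Proof.
elim: p w => [|a p IH] w //= wK /andP[ewa pa].
case: (boolP (a \in K)) => [aK _ | aK /= hp].
  by exists w => //; exists a; rewrite ?mem_head ?aK.
have [y ay [u up uy]] := IH a aK pa hp.
exists y; last by exists u; rewrite // inE up orbT.
by apply: connect_trans ay; apply: connect1; rewrite /outside /= ewa wK.
Qed.

Lemma cycle_outside_connect c w w' : cycle e c -> all (fun z => z \notin K) c ->
  w \in c -> w' \in c -> connect outside w w'.
Proof.
move=> cyc cK wc; case: (rot_to wc) => i r Hr.
rewrite -(mem_rot i) Hr => w'c.
have rK : all (fun z => z \notin K) (w :: r).
  by apply/allP => z; rewrite -Hr mem_rot => /(allP cK).
move: cyc; rewrite -(rot_cycle i) Hr /cycle rcons_path => /andP[pr _].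
exact: (path_connect (outside_path rK pr) w'c).
Qed.

Lemma cycle_enter c w : cycle e c -> w \in c -> w \notin K -> has (mem K) c ->
  exists2 y, connect outside w y & exists2 u, u \in c & (u \in K) && e y u.
Proof.
move=> cyc wc wK hc; case: (rot_to wc) => i r Hr.
have memr z : z \in r -> z \in c by move=> zr; rewrite -(mem_rot i) Hr inE zr orbT.
move: cyc hc; rewrite -(rot_cycle i) -(has_rot i) Hr /cycle rcons_path /= (negPf wK).
case/andP=> pr _ hr; have [y wy [u /memr uc uy]] := path_enter wK pr hr.
by exists y => //; exists u.
Qed.

Lemma avoiding_path_start v w p : v \in K -> K_avoiding_path e K v w p -> p != [::] ->
  exists2 x, (x \notin K) && e v x &
    if w \in K then exists2 y, connect outside x y & e y w else connect outside x w.
Proof.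
move=> vK [pth lst _ notedge]; case/lastP: p pth lst notedge => [//|q w'].
rewrite last_rcons belast_rcons => pth <- notedge /= qK _.
case: q pth notedge qK => [|x q] /=.
  rewrite vK /= !andbT => evw' w'K _; exists w'; first by rewrite w'K.
  by rewrite (negPf w'K).
rewrite rcons_path => /andP[evx /andP[pxq eqw']] _ /andP[xK qK].
exists x; first by rewrite xK evx.
case: ifPn => w'K.
  exists (last x q) => //; apply: path_connect (mem_last x q).
  by apply: outside_path; rewrite //= xK.
rewrite -[w'](last_rcons x q); apply: path_connect (mem_last _ _).
by apply: outside_path; rewrite /= ?rcons_path ?pxq ?eqw' // xK all_rcons w'K.
Qed.

End Outside.

Section HoleThroughClique.
Variables (T : finType) (e : rel T) (K : {set T}).
Hypotheses (e_sym : symmetric e) (e_irr : irreflexive e) (K_clique : is_clique e K).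
Hypothesis K_private :
  forall x v u, x \notin K -> v \in K -> u \in K -> e v x -> e x u -> v = u.

Variables v u : T.
Hypotheses (vK : v \in K) (uK : u \in K) (vu : v != u).

Local Notation outside := (outside e K).

(* The graph in which detours from [v] to [u] around [K] are walks: its
   vertices are [v], [u] and the vertices outside [K], and it has all edges
   of [e] between them except the edge [vu]. *)
Definition detour_vertex z := (z \notin K) || (z == v) || (z == u).
Definition detour : rel T :=
  [rel a b | [&& e a b, detour_vertex a, detour_vertex b & ~~ ((a \in K) && (b \in K))]].

Lemma detour_sym : symmetric detour.
Proof.
by move=> a b; rewrite /detour /= e_sym (andbC (a \in K)); congr (_ && _); apply: andbCA.
Qed.

Lemma detour_irr : irreflexive detour.
Proof. by move=> a; rewrite /detour /= e_irr. Qed.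

Lemma detour_walk_shape s : walk detour v u s ->
  exists2 q, s = v :: rcons q u & all (fun z => z \notin K) q.
Proof.
case/and4P=> pth U hd lst.
have [q Es] : exists q, s = v :: rcons q u.
  case: s {pth U} hd lst => [|v' p] /eqP /= hd lst.
    by move: vu; rewrite hd eqxx.
  subst v'; case/lastP: p lst => [|q u'] /eqP /=.
    by move=> vu'; move: vu; rewrite vu' eqxx.
  by rewrite last_rcons => ->; exists q.
exists q => //; subst s.
have [vq uq] : v \notin q /\ u \notin q.
  by move: U; rewrite /= mem_rcons inE rcons_uniq => /andP[/norP[_ ->] /andP[->]].
have /(path_targets (P := detour_vertex)) : forall a b, detour a b -> detour_vertex b.
  by move=> a b /and4P[].
move=> /(_ _ _ pth); rewrite all_rcons => /andP[_ /allP qd].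
apply/allP => z zq; have := qd z zq; rewrite /detour_vertex.
by rewrite (negPf (memPn vq z zq)) (negPf (memPn uq z zq)) !orbF.
Qed.

Lemma shortest_detour_hole s : walk detour v u s ->
  (forall s', walk detour v u s' -> size s <= size s') -> is_hole e [set z in s].
Proof.
move=> ws smin; have consec := shortest_walk_consecutive ws smin.
have [q Es qK] := detour_walk_shape ws.
case/and4P: ws consec => pq U _ _ consec; subst s.
have ch := chordless_of_splits detour_sym detour_irr U consec.
have inK z : z \in v :: rcons q u -> z \in K -> (z == v) || (z == u).
  rewrite inE mem_rcons inE => /or3P[-> // | -> | zq]; first by rewrite orbT.
  by rewrite (negPf (allP qK z zq)).
exists (v :: rcons q u); split => //.
- rewrite /= size_rcons !ltnS.
  case: q qK pq {ch U inK consec smin} => [|z [|z' q']] //=.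
    by rewrite andbT => _ /and4P[_ _ _]; rewrite vK uK.
  case/andP=> zK _ /and3P[/and4P[evz _ _ _] /and4P[ezu _ _ _] _].
  by move: vu; rewrite (K_private zK vK uK evz ezu) eqxx.
- rewrite /cycle rcons_path last_rcons K_clique 1?eq_sym // andbT.
  by apply: sub_path pq => a b /and4P[].
- move=> a b ac bc eab.
  case: (boolP ((a \in K) && (b \in K))) => [/andP[aK bK] | nK].
    have ab : a != b by apply: contraTneq eab => ->; rewrite e_irr.
    move: (inK a ac aK) (inK b bc bK) ab; do 2!case/orP=> /eqP->; rewrite ?eqxx //.
      by rewrite (prev_head U) eqxx orbT.
    by rewrite (next_last U) eqxx.
  have dv z : z \in v :: rcons q u -> detour_vertex z.
    by move=> zs; rewrite /detour_vertex; case: (boolP (z \in K)) => // /(inK z zs).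
  by apply: ch; rewrite // /detour /= eab nK !dv.
Qed.

Lemma hole_through x y : x \notin K -> e v x -> e y u -> connect outside x y ->
  exists S, [/\ is_hole e S, v \in S & u \in S].
Proof.
move=> xK evx eyu /connectP[p px Ey]; subst y.
have pK : all (fun z => z \notin K) (x :: p).
  by rewrite /= xK; apply: path_targets px => a b /and3P[].
have dv z : z \notin K -> detour_vertex z by rewrite /detour_vertex => ->.
have pd : path detour v (rcons (x :: p) u).
  have lK : last x p \notin K by apply: (allP pK); apply: mem_last.
  have [dvv dvu] : detour_vertex v /\ detour_vertex u.
    by rewrite /detour_vertex !eqxx !orbT.
  have dvx : detour v x by rewrite /detour /= evx dvv (negPf xK) andbF dv.
  have dyu : detour (last x p) u by rewrite /detour /= eyu dvu (negPf lK) dv.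
  rewrite rcons_path /= dvx dyu andbT.
  by apply: sub_path px => a b /and3P[eab aK bK]; rewrite /detour /= eab !dv // (negPf aK).
have := last_rcons v (x :: p) u; case: (shortenP pd) => p' pd' U' _ lst.
have w0 : walk detour v u (v :: p') by rewrite /walk /= pd' -/(uniq (v :: p')) U' lst !eqxx.
have [s ws smin] := shortest_walk_exists w0.
exists [set z in s]; split; first exact: shortest_detour_hole ws smin.
all: have [q -> _] := detour_walk_shape ws; rewrite inE.
- exact: mem_head.
- by rewrite inE mem_rcons mem_head orbT.
Qed.

End HoleThroughClique.

Lemma sum_le_card_mul (T : finType) (f : T -> nat) (A : {set T}) m :
  (forall v, f v <= (if v \in A then m else 0)) -> \sum_v f v <= #|A| * m.
Proof.
move=> fA; rewrite -sum_nat_const [leqRHS]big_mkcond /=.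
by apply: leq_sum => v _; apply: fA.
Qed.

Section Counting.
Variables (T : finType) (e : rel T) (holes : {set {set T}}) (K : {set T}).
Hypotheses (e_sym : symmetric e) (e_irr : irreflexive e) (K_max : maximal_clique e K).
Hypothesis K_unique : forall K', maximal_clique e K' -> non_edge_clique K' -> K' = K.
Hypothesis holesP : forall S, S \in holes <-> is_hole e S.

Local Notation outside := (outside e K).

Let K_clique : is_clique e K := proj1 K_max.

Definition on_shared_hole v := [exists H in holes, (v \in H) && (1 < #|H :&: K|)].

Definition reaches v (H : {set T}) :=
  [exists x, exists w in H, [&& x \notin K, e v x & connect outside x w]].

Definition charge (H : {set T}) v :=
  if v \in K then
    if v \in H then (if 1 < #|H :&: K| then 1 else 2)
    else if [&& #|H :&: K| == 0, reaches v H & ~~ on_shared_hole v] then 2 else 0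
  else 0.

Lemma shared_hole_of_link v u x y : v \in K -> u \in K -> v != u ->
  x \notin K -> e v x -> e y u -> connect outside x y -> on_shared_hole v.
Proof.
move=> vK uK vu xK evx eyu cxy.
have [S [hS vS uS]] := hole_through e_sym e_irr K_clique
  (outside_one_neighbour e_sym K_max K_unique) vK uK vu xK evx eyu cxy.
apply/existsP; exists S; rewrite (proj2 (holesP S) hS) vS /=.
by apply/card_gt1P; exists v, u; rewrite !inE vS uS vK uK.
Qed.

Lemma charge_le2 H v : charge H v <= 2.
Proof. by rewrite /charge; case: ifP => // _; case: ifP => _; case: ifP. Qed.

(* Two vertices of [K] reaching the same hole disjoint from [K] are linked
   outside [K], so they lie on a shared hole. *)
Lemma common_reach_shared H a b : H \in holes -> #|H :&: K| == 0 ->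
  a \in K -> b \in K -> a != b -> reaches a H -> reaches b H -> on_shared_hole a.
Proof.
move=> /holesP[c [_ _ cyc _ ->]] cK0 aK bK ab.
case/existsP=> xa /existsP[wa /and4P[wac xaK exa cxa]].
case/existsP=> xb /existsP[wb /and4P[wbc xbK exb cxb]].
have cK : all (fun z => z \notin K) c.
  apply/allP => z zc; apply: contraTN cK0 => zK.
  by rewrite cards_eq0; apply/set0Pn; exists z; rewrite !inE zc zK.
rewrite !inE in wac wbc; have cw := cycle_outside_connect cyc cK wac wbc.
apply: (shared_hole_of_link aK bK ab xaK exa (_ : e xb b)); first by rewrite e_sym.
rewrite (connect_trans cxa (connect_trans cw _)) //.
by rewrite (sym_connect_sym (outside_sym K e_sym)).
Qed.

Lemma hole_charge H : H \in holes -> \sum_v charge H v <= 2.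
Proof.
move=> Hh; have k2 := hole_meets_clique e_sym K_clique (proj1 (holesP H) Hh).
have [k1 | k1] := ltnP 1 #|H :&: K|.
  apply: leq_trans (sum_le_card_mul (A := H :&: K) (m := 1) _) _; last by rewrite muln1.
  move=> v; rewrite /charge inE; case: (v \in K); rewrite ?andbT ?andbF //.
  by case: (v \in H); rewrite /= ?k1 // (negbTE (lt0n_neq0 (ltnW k1))).
have [k0 | /negbTE k0] := boolP (#|H :&: K| == 0); last first.
  apply: leq_trans (sum_le_card_mul (A := H :&: K) (m := 2) _) _.
    move=> v; rewrite /charge inE; case: (v \in K); rewrite ?andbT ?andbF //.
    by case: (v \in H); rewrite /= ?k0 //; case: ifP.
  by move: k0 k1; case: #|_| => [|[]].
pose R := [set v | charge H v != 0].
apply: leq_trans (sum_le_card_mul (A := R) (m := 2) _) _.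
  by move=> v; rewrite inE; case: eqP => [-> | _]; rewrite ?charge_le2.
suff : #|R| <= 1 by rewrite -(leq_pmul2r (isT : 0 < 2)).
rewrite leqNgt; apply/negP => /card_gt1P[a [b [aR bR ab]]].
have inR v : v \in R -> [/\ v \in K, reaches v H & ~~ on_shared_hole v].
  rewrite inE /charge; case: (boolP (v \in K)) => // vK.
  case: (boolP (v \in H)) => [vH | _].
    move: k0; rewrite cards_eq0 => /eqP HK0.
    have : v \in H :&: K by rewrite inE vH vK.
    by rewrite HK0 inE.
  by rewrite k0 /=; case: (reaches v H); case: (on_shared_hole v).
have [aK ra /negP nsa] := inR a aR; have [bK rb _] := inR b bR.
exact/nsa/(common_reach_shared Hh k0 aK bK ab ra rb).
Qed.

Lemma charge_on_hole (H : {set T}) v : v \in K -> v \in H -> 0 < charge H v.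
Proof. by move=> vK vH; rewrite /charge vK vH; case: ifP. Qed.

(* A vertex on a shared hole [H0] lies on a [K]-edge of [H0]; if, failing
   alternative (b), it also lies on another hole, it sends charge to two
   distinct holes. *)
Lemma shared_vertex_charge v H0 : v \in K -> H0 \in holes -> v \in H0 -> 1 < #|H0 :&: K| ->
  (forall H, H \in holes -> (exists u, (u \in K) && hole_edge e H v u) ->
     exists2 H', H' \in holes & (v \in H') && (H' != H)) ->
  2 <= \sum_(H in holes) charge H v.
Proof.
move=> vK H0h vH0 /card_gt1P[a [b [aH bH ab]]] notB.
have [u []] : exists u, [/\ u \in K, u \in H0 & u != v].
  move: aH bH; rewrite !inE => /andP[aH aK] /andP[bH bK].
  case: (eqVneq a v) => [Ea | av]; last by exists a.
  by exists b; split; rewrite // -Ea eq_sym.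
move=> uK uH0 uv.
have [H' H'h /andP[vH' H'H0]] : exists2 H', H' \in holes & (v \in H') && (H' != H0).
  apply: notB H0h _; exists u; rewrite uK /hole_edge vH0 uH0 andbT /=.
  by rewrite K_clique // eq_sym.
rewrite (bigD1 H0) //= (bigD1 H') /=; last by rewrite H'h H'H0.
by have := charge_on_hole vK vH0; have := charge_on_hole vK vH'; lia.
Qed.

Lemma unshared_vertex_charge v H w p : v \in K -> ~~ on_shared_hole v ->
  H \in holes -> w \in H -> K_avoiding_path e K v w p -> charge H v = 2.
Proof.
move=> vK nsh Hh wH kp.
have [vH | vH] := boolP (v \in H).
  rewrite /charge vK vH; case: ifP => // k1; case/negP: nsh.
  by apply/existsP; exists H; rewrite Hh vH k1.
have pn : p != [::] by apply: contraNneq vH => p0; case: kp => _; rewrite p0 /= => ->.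
have [x /andP[xK evx] hx] := avoiding_path_start vK kp pn.
have [k0 | k0] := boolP (#|H :&: K| == 0).
  have wK : w \notin K.
    apply: contraTN k0 => wK; rewrite cards_eq0.
    by apply/set0Pn; exists w; rewrite inE wH wK.
  rewrite (negPf wK) in hx.
  have rvH : reaches v H.
    by apply/existsP; exists x; apply/existsP; exists w; rewrite wH xK evx.
  by rewrite /charge vK (negPf vH) k0 nsh rvH.
case/negP: nsh; have [c [_ _ cyc _ EH]] := proj1 (holesP H) Hh.
have notH z : z \in H -> v != z by move=> zH; apply: contraNneq vH => ->.
have [wK | wK] := boolP (w \in K).
  move: hx; rewrite wK => -[y xy eyw].
  exact: shared_hole_of_link vK wK (notH w wH) xK evx eyw xy.
have hc : has (mem K) c.
  have [u] : exists u, u \in H :&: K by apply/set0Pn; rewrite -cards_eq0.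
  by rewrite inE EH inE => /andP[uc uK]; apply/hasP; exists u.
have wc : w \in c by rewrite EH inE in wH.
rewrite (negPf wK) in hx.
have [y wy [u uc /andP[uK eyu]]] := cycle_enter cyc wc wK hc.
apply: (shared_hole_of_link vK uK _ xK evx eyu (connect_trans hx wy)).
by apply: notH; rewrite EH inE.
Qed.

Lemma vertex_charge v : v \in K ->
  (exists H w p, [/\ H \in holes, w \in H & K_avoiding_path e K v w p]) ->
  (forall H, H \in holes -> (exists u, (u \in K) && hole_edge e H v u) ->
     exists2 H', H' \in holes & (v \in H') && (H' != H)) ->
  2 <= \sum_(H in holes) charge H v.
Proof.
move=> vK [H [w [p [Hh wH kp]]]] notB.
have [/exists_inP[H0 H0h /andP[vH0 k1]] | nsh] := boolP (on_shared_hole v).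
  exact: shared_vertex_charge H0h vH0 k1 notB.
by rewrite (bigD1 H) //= (unshared_vertex_charge vK nsh Hh wH kp) leq_addr.
Qed.

Lemma charge_count : (forall v, v \in K -> 2 <= \sum_(H in holes) charge H v) ->
  #|K| <= #|holes|.
Proof.
move=> vbound; rewrite -(leq_pmul2l (isT : 0 < 2)).
apply: (@leq_trans (\sum_v \sum_(H in holes) charge H v)).
  rewrite mulnC -sum_nat_const [leqRHS](bigID (mem K)) /=.
  by apply: leq_trans (leq_addr _ _); apply: leq_sum.
rewrite exchange_big mulnC -sum_nat_const /=.
by apply: leq_sum => H Hh; apply: hole_charge.
Qed.

End Counting.

Theorem lemma3 (T : finType) (e : rel T) (holes : {set {set T}}) (K : {set T})
  (Hsimple : simple_graph e)
  (Hconn : connected_graph e)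
  (Hholes : forall S : {set T}, S \in holes <-> is_hole e S)
  (Hdisj : forall H1 H2 : {set T}, H1 \in holes -> H2 \in holes -> H1 != H2 ->
             forall x y : T, ~~ (hole_edge e H1 x y && hole_edge e H2 x y))
  (HK : maximal_clique e K) (HK3 : non_edge_clique K)
  (HKuniq : forall K' : {set T}, maximal_clique e K' -> non_edge_clique K' -> K' = K)
  (Hsize : #|K| = #|holes| + 1) :
  exists2 v : T, v \in K &
    (forall (H : {set T}) (w : T) (p : seq T),
        H \in holes -> w \in H -> ~ K_avoiding_path e K v w p)
    \/
    (exists2 H : {set T}, H \in holes &
       (exists u : T, (u \in K) && hole_edge e H v u) /\
       (forall H' : {set T}, H' \in holes -> v \in H' -> H' = H)).
Proof.
case: Hsimple => e_sym e_irr; apply: NNPP => fails.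
suff : #|K| <= #|holes| by rewrite Hsize addn1 ltnn.
apply: (charge_count e_sym e_irr HK HKuniq Hholes) => v vK.
apply: (vertex_charge e_sym e_irr HK HKuniq Hholes vK).
  apply: NNPP => notA; apply: fails; exists v => //; left => H w p Hh wH kp.
  by apply: notA; exists H, w, p.
move=> H Hh edge; apply: NNPP => notB; apply: fails; exists v => //; right.
exists H => //; split=> // H' H'h vH'; apply: NNPP => H'H; apply: notB.
by exists H' => //; rewrite vH'; apply/eqP.
Qed.
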